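(* Let $\mathcal{M}$ be a deterministic MDP with $|\mathcal{S}\times\mathcal{A}|<\infty$, and let $\mathcal{D}$ be an offline dataset of transitions such that $N(s,a,\mathcal{T}(s,a))\ge1$ for every $(s,a)\in\mathcal{S}\times\mathcal{A}$. Then DiSPOs trained on $\mathcal{D}$ are guaranteed to identify an optimal policy (for any reward $r(s)=w_r^\top\phi(s)$ linear in the features).
   Context: $\mathcal{M}$ has state space $\mathcal{S}$, action space $\mathcal{A}$, deterministic transition $\mathcal{T}:\mathcal{S}\times\mathcal{A}\to\mathcal{S}$, discount $\gamma\in(0,1)$, and reward $r(s)=w_r^\top\phi(s)$ for a feature map $\phi:\mathcal{S}\to\mathbb{R}^d$. $N(s,a,s')$ denotes the number of occurrences of the transition $(s,a,s')$ in the dataset $\mathcal{D}$. A DiSPO consists of (1) an outcome model $p(\psi\mid s)$, the distribution of successor features $\psi=\sum_{t\ge1}\gamma^{t-1}\phi(s_t)$ over trajectories starting at $s_1=s$ that are covered by the dataset (learned by the fixed point of the distributional Bellman update: $p(\cdot\mid s)$ maximizes the likelihood of $\phi(s)+\gamma\psi_{s'}$ with $(s,a,s')\in\mathcal{D}$, $\psi_{s'}\sim p(\cdot\mid s')$), and (2) a readout policy $\pi(a\mid s,\psi)$ which outputs an action $a$ at $s$ whose dataset transition $(s,a,s')$ realizes the outcome $\psi=\phi(s)+\gamma\psi_{s'}$ with $\psi_{s'}$ in the support of $p(\cdot\mid s')$. The DiSPO policy at state $s$ selects $\psi^*\in\arg\max_\psi w_r^\top\psi$ subject to $p(\psi\mid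 s)>0$ and takes the action $a\sim\pi(a\mid s,\psi^* )$. *)

From HB Require Import structures.
From mathcomp Require Import all_boot all_order all_algebra.
From mathcomp Require Import all_classical all_reals.
From mathcomp Require Import topology normedtype sequences.
Set Implicit Arguments. Unset Strict Implicit. Unset Printing Implicit Defensive.
Import Order.TTheory GRing.Theory Num.Theory.
Import numFieldNormedType.Exports.
Local Open Scope classical_set_scope.
Local Open Scope ring_scope.

(** Deterministic trajectory s_1 = s0, s_{k+1} = T(s_k, a_k)  (0-indexed here). *)
Fixpoint traj (S A : Type) (T : S -> A -> S) (s0 : S) (a : nat -> A) (k : nat) : S :=
  match k with
  | 0 => s0
  | k'.+1 => T (traj T s0 a k') (a k')
  end.

Fixpoint rollout (S A : Type) (T : S -> A -> S) (mu : S -> A) (s0 : S) (k : nat) : S :=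
  match k with
  | 0 => s0
  | k'.+1 => T (rollout T mu s0 k') (mu (rollout T mu s0 k'))
  end.

Definition dotv (R : realType) (d : nat) (w x : 'I_d -> R) : R :=
  \sum_(i < d) w i * x i.

Definition succ_feat (R : realType) (S : Type) (d : nat) (gamma : R)
  (phi : S -> 'I_d -> R) (x : nat -> S) : 'I_d -> R :=
  fun i => limn (series (fun k => gamma ^+ k * phi (x k) i)).

Definition disc_return (R : realType) (S : Type) (d : nat) (gamma : R)
  (phi : S -> 'I_d -> R) (w : 'I_d -> R) (x : nat -> S) : R :=
  limn (series (fun k => gamma ^+ k * dotv w (phi (x k)))).

Definition covered (S A : Type) (T : S -> A -> S) (N : S -> A -> S -> nat)
  (s0 : S) (a : nat -> A) : Prop :=
  forall k, (0 < N (traj T s0 a k) (a k) (traj T s0 a k.+1))%N.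

(** Support of the DiSPO outcome model p(. | s): successor features of all
    dataset-covered trajectories starting at s. *)
Definition outcome_support (R : realType) (S A : Type) (d : nat)
  (T : S -> A -> S) (N : S -> A -> S -> nat) (gamma : R)
  (phi : S -> 'I_d -> R) (s : S) : set ('I_d -> R) :=
  [set psi | exists a : nat -> A,
      covered T N s a /\ psi = succ_feat gamma phi (traj T s a)].

Definition is_readout (R : realType) (S A : Type) (d : nat)
  (T : S -> A -> S) (N : S -> A -> S -> nat) (gamma : R)
  (phi : S -> 'I_d -> R) (pi : S -> ('I_d -> R) -> A) : Prop :=
  forall s psi, outcome_support T N gamma phi s psi ->
    (0 < N s (pi s psi) (T s (pi s psi)))%N /\
    exists psi', outcome_support T N gamma phi (T s (pi s psi)) psi' /\
      psi = (fun i => phi s i + gamma * psi' i).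

Definition is_max_outcome (R : realType) (S A : Type) (d : nat)
  (T : S -> A -> S) (N : S -> A -> S -> nat) (gamma : R)
  (phi : S -> 'I_d -> R) (w : 'I_d -> R) (s : S) (psi : 'I_d -> R) : Prop :=
  outcome_support T N gamma phi s psi /\
  forall psi', outcome_support T N gamma phi s psi' -> dotv w psi' <= dotv w psi.

From HB Require Import structures.
From mathcomp Require Import all_boot all_order all_algebra.
From mathcomp Require Import all_classical all_reals.
From mathcomp Require Import topology normedtype sequences.
From mathcomp Require Import ring.

(** With full coverage, the outcome support at [s] consists of the successor
    features of all action sequences from [s], and [w^T psi] is the discounted
    return of the corresponding trajectory.  Hence a maximal outcome has value
    V*(s), the supremum of all returns from [s].  V* satisfies
    V*(s) >= r(s) + gamma V*(T(s,b)) for every action [b], with equality for a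
    greedy [b] and, by maximality, for the action of any readout of a maximal
    outcome.  Telescoping the Bellman equation along a policy attaining it
    shows that its return is V*(s0), which bounds every return from [s0]. *)

Set Implicit Arguments.
Unset Strict Implicit.
Unset Printing Implicit Defensive.

Import Order.TTheory GRing.Theory Num.Theory.
Import numFieldNormedType.Exports.
Local Open Scope classical_set_scope.
Local Open Scope ring_scope.

Lemma norm_le_sum_norm (R : numDomainType) (I : finType) (f : I -> R) (i : I) :
  `|f i| <= \sum_j `|f j|.
Proof. by rewrite (bigD1 i) //= lerDl sumr_ge0. Qed.

Lemma dotvDZ (R : realType) (d : nat) (w p q : 'I_d -> R) (c : R) :
  dotv w (fun i => p i + c * q i) = dotv w p + c * dotv w q.
Proof. by rewrite /dotv mulr_sumr -big_split; apply: eq_bigr => i _ /=; ring. Qed.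

Section DiscountedSum.
Variables (R : realType) (gamma : R).
Hypothesis gamma_lt1 : `|gamma| < 1.

Definition discounted_sum (u : nat -> R) : R :=
  limn (series (fun k => gamma ^+ k * u k)).

Lemma discounted_series_norm_le (M : R) (u : nat -> R) :
  (forall k, `|u k| <= M) ->
  forall k, `|gamma ^+ k * u k| <= geometric M `|gamma| k.
Proof. by move=> u_le k; rewrite /= normrM normrX mulrC ler_wpM2r ?exprn_ge0. Qed.

Lemma is_cvg_discounted_norm (M : R) (u : nat -> R) :
  (forall k, `|u k| <= M) -> cvgn [normed series (fun k => gamma ^+ k * u k)].
Proof.
move=> u_le; apply: (@series_le_cvg _ _ (geometric M `|gamma|)) => [k|k|k|].
- exact: normr_ge0.
- by rewrite /= mulr_ge0 ?exprn_ge0 // (le_trans _ (u_le 0%N)).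
- exact: discounted_series_norm_le.
- by apply: is_cvg_geometric_series; rewrite normr_id.
Qed.

Lemma is_cvg_discounted_series (M : R) (u : nat -> R) :
  (forall k, `|u k| <= M) -> cvgn (series (fun k => gamma ^+ k * u k)).
Proof. by move/is_cvg_discounted_norm; exact: normed_cvg. Qed.

Lemma discounted_sum_le (M : R) (u : nat -> R) :
  (forall k, `|u k| <= M) -> discounted_sum u <= M / (1 - `|gamma|).
Proof.
move=> u_le; have u_ncvg := is_cvg_discounted_norm u_le.
have gamma_norm_lt1 : `|Num.norm gamma| < 1 by rewrite normr_id.
rewrite -(cvg_lim _ (@cvg_geometric_series _ M _ gamma_norm_lt1)) //.
apply: le_trans (ler_norm _) _; apply: le_trans (lim_series_norm u_ncvg) _.
apply: lim_series_le => //; last exact: discounted_series_norm_le.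
exact: is_cvg_geometric_series.
Qed.

Lemma discounted_sumS (M : R) (u : nat -> R) :
  (forall k, `|u k| <= M) ->
  discounted_sum u = u 0%N + gamma * discounted_sum (fun k => u k.+1).
Proof.
move=> u_le; apply: cvg_lim => //; rewrite -cvg_shiftS /=.
have -> : (fun n => series (fun k => gamma ^+ k * u k) n.+1) =
    (fun n => u 0%N + gamma * series (fun k => gamma ^+ k * u k.+1) n).
  apply/funext => n; rewrite !seriesEord /= big_ord_recl /= expr0 mul1r mulr_sumr.
  by congr (_ + _); apply: eq_bigr => i _; rewrite /bump /= add1n exprS mulrA.
apply: cvgD; first exact: cvg_cst.
exact: cvgMl_tmp (is_cvg_discounted_series (fun k => u_le k.+1)).
Qed.

Lemma discounted_sum_telescope (M : R) (u v : nat -> R) :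
  (forall k, `|v k| <= M) -> (forall k, v k = u k + gamma * v k.+1) ->
  discounted_sum u = v 0%N.
Proof.
move=> v_le v_rec.
have partial_sum n : series (fun k => gamma ^+ k * u k) n = v 0%N - gamma ^+ n * v n.
  elim: n => [|n IH]; first by rewrite seriesEord /= big_ord0 expr0 mul1r subrr.
  by rewrite seriesSr IH (v_rec n) exprS; ring.
suff : series (fun k => gamma ^+ k * u k) @ \oo --> v 0%N - 0.
  by rewrite subr0; exact: cvg_lim.
rewrite (funext partial_sum); apply: cvgB; first exact: cvg_cst.
exact: cvg_series_cvg_0 (is_cvg_discounted_series v_le).
Qed.

Lemma discounted_sum_lincomb (I : Type) (r : seq I) (c : I -> R) (u : I -> nat -> R) :
  (forall i, cvgn (series (fun k => gamma ^+ k * u i k))) ->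
  discounted_sum (fun k => \sum_(i <- r) c i * u i k) =
  \sum_(i <- r) c i * discounted_sum (u i).
Proof.
move=> u_cvg; apply: cvg_lim => //.
have -> : series (fun k => gamma ^+ k * \sum_(i <- r) c i * u i k) =
    (fun n => \sum_(i <- r) c i * series (fun k => gamma ^+ k * u i k) n).
  apply/funext => n; rewrite seriesEord /=.
  under [RHS]eq_bigr do rewrite seriesEord /= mulr_sumr.
  rewrite [RHS]exchange_big /=; apply: eq_bigr => k _.
  by rewrite mulr_sumr; apply: eq_bigr => i _; ring.
apply: cvg_big => // [|i _]; first exact: add_continuous.
exact: cvgMl_tmp (u_cvg i).
Qed.

End DiscountedSum.

Lemma traj_shift (S A : Type) (T : S -> A -> S) (s : S) (a : nat -> A) (k : nat) :
  traj T s a k.+1 = traj T (T s (a 0%N)) (fun j => a j.+1) k.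
Proof. by elim: k => [|k IH] //=; rewrite -IH. Qed.

Lemma rollout_traj (S A : Type) (T : S -> A -> S) (mu : S -> A) (s : S) :
  rollout T mu s = traj T s (fun k => mu (rollout T mu s k)).
Proof. by apply/funext; elim=> [|k IH] //=; rewrite -IH. Qed.

Section DeterministicMDP.
Variables (R : realType) (gamma : R) (S A : finType) (a0 : A) (T : S -> A -> S).
Hypotheses (gamma_gt0 : 0 < gamma) (gamma_lt1 : gamma < 1).

Let gamma_norm_lt1 : `|gamma| < 1. Proof. by rewrite gtr0_norm. Qed.

Let comp_le_sum_norm (f : S -> R) (x : nat -> S) k : `|(f \o x) k| <= \sum_s `|f s|.
Proof. exact: norm_le_sum_norm. Qed.

Lemma discounted_sum_traj (g : S -> R) (s : S) (a : nat -> A) :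
  discounted_sum gamma (g \o traj T s a) =
  g s + gamma * discounted_sum gamma (g \o traj T (T s (a 0%N)) (fun k => a k.+1)).
Proof.
rewrite (discounted_sumS gamma_norm_lt1 (comp_le_sum_norm g _)); congr (_ + _ * _).
by congr discounted_sum; apply/funext => k; rewrite /comp traj_shift.
Qed.

Definition opt_value (g : S -> R) (s : S) : R :=
  sup (range (fun a : nat -> A => discounted_sum gamma (g \o traj T s a))).

Section OptimalValue.
Variable g : S -> R.

Lemma has_sup_traj_returns s :
  has_sup (range (fun a : nat -> A => discounted_sum gamma (g \o traj T s a))).
Proof.
split; first by exists (discounted_sum gamma (g \o traj T s (fun=> a0))), (fun=> a0).
exists ((\sum_s `|g s|) / (1 - `|gamma|)) => _ [a _ <-].
by apply: (discounted_sum_le gamma_norm_lt1) => k; exact: comp_le_sum_norm.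
Qed.

Lemma discounted_sum_le_opt_value s a :
  discounted_sum gamma (g \o traj T s a) <= opt_value g s.
Proof. by apply: (sup_upper_bound (has_sup_traj_returns s)); exists a. Qed.

Lemma opt_value_ge_step s b : g s + gamma * opt_value g (T s b) <= opt_value g s.
Proof.
rewrite -lerBrDl mulrC -ler_pdivlMr //.
apply: ge_sup => [|_ [a _ <-]]; first exact: (has_sup_traj_returns _).1.
rewrite ler_pdivlMr // mulrC lerBrDl.
pose b_then_a k := if k is k'.+1 then a k' else b.
by have := discounted_sum_le_opt_value s b_then_a; rewrite discounted_sum_traj.
Qed.

Lemma opt_value_greedy s : exists b, opt_value g s = g s + gamma * opt_value g (T s b).
Proof.
have [b _ b_max] := @arg_maxP _ R A a0 xpredT (fun b => opt_value g (T s b)) isT.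
exists b; apply/le_anti; rewrite opt_value_ge_step andbT.
apply: ge_sup => [|_ [a _ <-]]; first exact: (has_sup_traj_returns _).1.
rewrite discounted_sum_traj lerD2l ler_pM2l //.
by apply: le_trans (discounted_sum_le_opt_value _ _) _; exact: b_max.
Qed.

Lemma discounted_sum_rollout (mu : S -> A) (V : S -> R) :
  (forall s, V s = g s + gamma * V (T s (mu s))) ->
  forall s, discounted_sum gamma (g \o rollout T mu s) = V s.
Proof.
move=> V_rec s.
apply: (discounted_sum_telescope gamma_norm_lt1 (comp_le_sum_norm V (rollout T mu s))).
by move=> k /=; exact: V_rec.
Qed.

Lemma rollout_optimal (mu : S -> A) :
  (forall s, opt_value g s = g s + gamma * opt_value g (T s (mu s))) ->
  forall s a, discounted_sum gamma (g \o traj T s a) <=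
              discounted_sum gamma (g \o rollout T mu s).
Proof.
by move=> mu_rec s a; rewrite (discounted_sum_rollout mu_rec) discounted_sum_le_opt_value.
Qed.

End OptimalValue.

Section DiSPO.
Variables (d : nat) (phi : S -> 'I_d -> R) (N : S -> A -> S -> nat) (w : 'I_d -> R).
Hypothesis coverage : forall s a, (1 <= N s a (T s a))%N.

Local Notation support := (outcome_support T N gamma phi).
Local Notation reward := (fun s => dotv w (phi s)).

Lemma outcome_supportP s psi :
  support s psi <-> exists a, psi = succ_feat gamma phi (traj T s a).
Proof. by split=> [[a [_ ->]]|[a ->]]; exists a => //; split=> // k; exact: coverage. Qed.

Lemma succ_feat_traj s a :
  succ_feat gamma phi (traj T s a) =
  (fun i => phi s i + gamma * succ_feat gamma phi (traj T (T s (a 0%N)) (fun k => a k.+1)) i).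
Proof. by apply/funext => i; exact: (discounted_sum_traj (phi^~ i)). Qed.

Lemma dotv_succ_feat x :
  dotv w (succ_feat gamma phi x) = discounted_sum gamma (reward \o x).
Proof.
rewrite /dotv -discounted_sum_lincomb // => i.
exact: (is_cvg_discounted_series gamma_norm_lt1 (comp_le_sum_norm (phi^~ i) x)).
Qed.

Lemma dotv_le_opt_value s psi : support s psi -> dotv w psi <= opt_value reward s.
Proof.
by move=> /outcome_supportP[a ->]; rewrite dotv_succ_feat discounted_sum_le_opt_value.
Qed.

Lemma max_outcome_value s psi :
  is_max_outcome T N gamma phi w s psi -> dotv w psi = opt_value reward s.
Proof.
move=> [psi_supp psi_max]; apply/le_anti; rewrite dotv_le_opt_value //=.
apply: ge_sup => [|_ [a _ <-]]; first exact: (has_sup_traj_returns _ _).1.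
by rewrite -dotv_succ_feat; apply: psi_max; apply/outcome_supportP; exists a.
Qed.

Lemma max_outcome_exists s : exists psi, is_max_outcome T N gamma phi w s psi.
Proof.
have [mu mu_rec] := choice (opt_value_greedy reward).
exists (succ_feat gamma phi (rollout T mu s)); split.
  by apply/outcome_supportP; exists (fun k => mu (rollout T mu s k)); rewrite -rollout_traj.
move=> _ /outcome_supportP[a ->]; rewrite !dotv_succ_feat.
exact: rollout_optimal mu_rec s a.
Qed.

Lemma readout_exists : exists pi, is_readout T N gamma phi pi.
Proof.
have readout_step (sp : S * ('I_d -> R)) : exists b, support sp.1 sp.2 ->
    (0 < N sp.1 b (T sp.1 b))%N /\ exists psi', support (T sp.1 b) psi' /\
      sp.2 = (fun i => phi sp.1 i + gamma * psi' i).
  case: sp => s psi /=.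
  have [|psi_out] := pselect (support s psi); last by exists a0 => /psi_out.
  move=> /outcome_supportP[a ->]; exists (a 0%N) => _; split; first exact: coverage.
  eexists; split; last exact: succ_feat_traj.
  by apply/outcome_supportP; eexists.
have [f f_readout] := choice readout_step.
by exists (fun s psi => f (s, psi)) => s psi; exact: (f_readout (s, psi)).
Qed.

Lemma readout_bellman (psistar : S -> 'I_d -> R) (pi : S -> ('I_d -> R) -> A) :
  (forall s, is_max_outcome T N gamma phi w s (psistar s)) ->
  is_readout T N gamma phi pi ->
  forall s, opt_value reward s =
    reward s + gamma * opt_value reward (T s (pi s (psistar s))).
Proof.
move=> psistar_max pi_readout s.
apply/le_anti; rewrite opt_value_ge_step andbT.
have [_ [psi' [psi'_supp psistarE]]] := pi_readout s _ (psistar_max s).1.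
rewrite -(max_outcome_value (psistar_max s)) {1}psistarE dotvDZ lerD2l ler_pM2l //.
exact: dotv_le_opt_value.
Qed.

End DiSPO.
End DeterministicMDP.

Theorem theorem2 (R : realType) (S A : finType) (a0 : A) (d : nat)
  (T : S -> A -> S) (gamma : R) (phi : S -> 'I_d -> R)
  (N : S -> A -> S -> nat) :
  0 < gamma < 1 ->
  (* D consists of transitions of the deterministic MDP *)
  (forall s a s', (0 < N s a s')%N -> s' = T s a) ->
  (* coverage: N(s, a, T(s,a)) >= 1 for all (s, a) *)
  (forall s a, (1 <= N s a (T s a))%N) ->
  forall w : 'I_d -> R,
    (* the DiSPO policy is well defined: maximal outcomes and readouts exist *)
    (forall s, exists psi, is_max_outcome T N gamma phi w s psi) /\
    (exists pi, is_readout T N gamma phi pi) /\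
    (* and every DiSPO policy is optimal *)
    (forall (psistar : S -> ('I_d -> R)) (pi : S -> ('I_d -> R) -> A),
      (forall s, is_max_outcome T N gamma phi w s (psistar s)) ->
      is_readout T N gamma phi pi ->
      forall (s0 : S) (a : nat -> A),
        disc_return gamma phi w (traj T s0 a)
        <= disc_return gamma phi w (rollout T (fun s => pi s (psistar s)) s0)).
Proof.
(* Coverage alone suffices: [covered] only inspects N along true transitions. *)
move=> /andP[gamma_gt0 gamma_lt1] _ coverage w.
split; [|split].
- exact: (max_outcome_exists a0 gamma_gt0 gamma_lt1 phi w coverage).
- exact: (readout_exists a0 gamma_gt0 gamma_lt1 phi coverage).
- move=> psistar pi psistar_max pi_readout.
  exact: (rollout_optimal a0 gamma_gt0 gamma_lt1
    (readout_bellman a0 gamma_gt0 gamma_lt1 coverage psistar_max pi_readout)).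
Qed.
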